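(* In the iAPG setting described in the context, for every $k\ge0$, $$F(x^{(k+1)})-F^*+\frac{\gamma_{k+1}}{2}\|x^*-z^{(k+1)}\|^2\le(1-\alpha_k)\Big[F(x^{(k)})-F^*+\frac{\gamma_k}{2}\|x^*-z^{(k)}\|^2\Big]+\varepsilon_k\alpha_k\|x^*-z^{(k+1)}\|.$$
   Context: iAPG setting. Let $g,h:\mathbb R^n\to\mathbb R$ and $r:\mathbb R^n\to\mathbb R\cup\{+\infty\}$, where $g$ is convex, $\mu$-strongly convex for some $\mu\ge0$, and differentiable with $L_g$-Lipschitz gradient ($L_g>0$); $h$ is convex and differentiable with $L_h$-Lipschitz gradient; $r$ is proper, closed and convex. Put $H=h+r$, $F=g+H$, and assume $F$ attains its minimum value $F^*$ at some point $x^*$. Fix constants $\gamma_{\mathrm{dec}}\in(0,1)$ and $\underline L>0$ with $\mu\le\underline L\le L_g$. We consider points $x^{(k)},z^{(k)},y^{(k)}\in\mathbb R^n$ and scalars $\eta_k>0,\alpha_k>0,\gamma_k>0,\varepsilon_k\ge0$ ($k\ge0$) such that $x^{(0)}=z^{(0)}\in\mathrm{dom}(H)$, $\gamma_0\ge\mu$, and for every $k\ge0$: (i) $\gamma_{\mathrm{dec}}/L_g<\eta_k\le1/\underline L$; (ii) $\gamma_{k+1}=\alpha_k^2/\eta_k=(1-\alpha_k)\gamma_k+\alpha_k\mu$; (iii) $y^{(k)}=\frac{1}{\alpha_k\gamma_k+\gamma_{k+1}}\big(\alpha_k\gamma_k z^{(k)}+\gamma_{k+1}x^{(k)}\big)$;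 (iv) $\mathrm{dist}\big(0,\ \nabla g(y^{(k)})+\tfrac1{\eta_k}(x^{(k+1)}-y^{(k)})+\partial H(x^{(k+1)})\big)\le\varepsilon_k$; (v) $g(x^{(k+1)})\le g(y^{(k)})+\langle\nabla g(y^{(k)}),x^{(k+1)}-y^{(k)}\rangle+\frac1{2\eta_k}\|x^{(k+1)}-y^{(k)}\|^2$; (vi) $z^{(k+1)}=x^{(k)}+\frac1{\alpha_k}(x^{(k+1)}-x^{(k)})$. Here $\partial$ denotes the convex subdifferential and $\mathrm{dist}(0,S)=\inf_{s\in S}\|s\|$. *)

From mathcomp Require Import all_boot all_order all_algebra all_classical all_reals all_analysis.
Import Order.TTheory GRing.Theory Num.Theory.
Import numFieldNormedType.Exports.
Local Open Scope ring_scope.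
Local Open Scope classical_set_scope.

Set Implicit Arguments. Unset Strict Implicit. Unset Printing Implicit Defensive.

Section Defs.
Variables (R : realType) (n : nat).
Notation vec := 'rV[R]_n.

Definition dotv (u v : vec) : R := \sum_(i < n) u 0 i * v 0 i.
Definition enorm (u : vec) : R := Num.sqrt (dotv u u).

(* df is the gradient of f: f is (Frechet) differentiable at every x with
   derivative v |-> <df x, v>. *)
Definition is_gradient (f : vec -> R) (df : vec -> vec) : Prop :=
  forall x : vec, forall e : R, 0 < e -> exists d : R, 0 < d /\
    forall y : vec, enorm (y - x) < d ->
      `|f y - f x - dotv (df x) (y - x)| <= e * enorm (y - x).

Definition lipschitz_with (L : R) (G : vec -> vec) : Prop :=
  forall x y : vec, enorm (G x - G y) <= L * enorm (x - y).

Definition convex_fun (f : vec -> R) : Prop :=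
  forall (x y : vec) (t : R), 0 <= t <= 1 ->
    f (t *: x + (1 - t) *: y) <= t * f x + (1 - t) * f y.

Definition strongly_convex (mu : R) (f : vec -> R) : Prop :=
  forall (x y : vec) (t : R), 0 <= t <= 1 ->
    f (t *: x + (1 - t) *: y)
      <= t * f x + (1 - t) * f y - mu / 2 * t * (1 - t) * enorm (x - y) ^+ 2.

Definition dom (f : vec -> \bar R) : set vec := [set x | f x < +oo]%E.

Definition proper_fun (f : vec -> \bar R) : Prop :=
  (forall x, f x != -oo)%E /\ exists x, (f x < +oo)%E.

(* closed = closed epigraph (in R^n x R) *)
Definition closed_fun (f : vec -> \bar R) : Prop :=
  closed [set p : (vec * R)%type | (f p.1 <= p.2%:E)%E].

Definition convex_efun (f : vec -> \bar R) : Prop :=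
  forall (x y : vec) (t : R), 0 < t < 1 ->
    (f (t *: x + (1 - t) *: y)%R <= t%:E * f x + (1 - t)%:E * f y)%E.

(* convex subdifferential of an extended-valued function (empty off the domain) *)
Definition subdiff (f : vec -> \bar R) (x : vec) : set vec :=
  [set v | (f x < +oo)%E /\ forall y, (f x + (dotv v (y - x)%R)%:E <= f y)%E].

(* dist(0, S) = inf_{s in S} ||s||  (= +oo if S is empty) *)
Definition dist0 (S : set vec) : \bar R := ereal_inf [set (enorm s)%:E | s in S].

End Defs.

From mathcomp Require Import all_boot all_order all_algebra all_classical all_reals all_analysis.
From mathcomp Require Import ring lra.
Import Order.TTheory GRing.Theory Num.Theory.
Import numFieldNormedType.Exports.
Local Open Scope ring_scope.
Local Open Scope classical_set_scope.

Set Implicit Arguments. Unset Strict Implicit. Unset Printing Implicit Defensive.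

(* Compare F(x_{k+1}) with F at u = a x* + (1 - a) x_k.  Condition (iv) gives, up to
   any d > 0, a subgradient v of H at x_{k+1} whose residual
   s = grad g(y) + (x_{k+1} - y)/eta + v has norm at most eps.  With the descent
   condition (v) and the strong-convexity lower bound of g at y this yields
     F(x_{k+1}) <= F(u) - <s, u - x_{k+1}> + (1/eta - mu)/2 |u - y|^2 - 1/(2 eta) |u - x_{k+1}|^2.
   By (vi), u - x_{k+1} = a (x* - z_{k+1}), and a^2/eta = gamma_{k+1}.  By (ii) and (iii),
   u - y is a/(gamma + a mu) times gamma (x* - z_k) + a mu (x* - x_k), so convexity of the
   squared norm bounds the |u - y|^2 term by (1 - a)/2 (gamma |x* - z_k|^2 + a mu |x* - x_k|^2);
   strong convexity of F along [x_k, x*] absorbs the a mu term. *)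

Section InnerProduct.
Variables (R : realType) (n : nat).
Implicit Types (u v w : 'rV[R]_n) (c : R).

Lemma dotvC u v : dotv u v = dotv v u.
Proof. by apply: eq_bigr => i _; rewrite mulrC. Qed.

Lemma dotvDl u v w : dotv (u + v) w = dotv u w + dotv v w.
Proof. by rewrite /dotv -big_split; apply: eq_bigr => i _; rewrite mxE mulrDl. Qed.

Lemma dotvZl c u w : dotv (c *: u) w = c * dotv u w.
Proof. by rewrite /dotv mulr_sumr; apply: eq_bigr => i _; rewrite mxE mulrA. Qed.

Lemma dotvNl u w : dotv (- u) w = - dotv u w.
Proof. by rewrite -scaleN1r dotvZl mulN1r. Qed.

Lemma dotvBl u v w : dotv (u - v) w = dotv u w - dotv v w.
Proof. by rewrite dotvDl dotvNl. Qed.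

Lemma dotvDr u v w : dotv w (u + v) = dotv w u + dotv w v.
Proof. by rewrite dotvC dotvDl !(dotvC w). Qed.

Lemma dotvZr c u w : dotv w (c *: u) = c * dotv w u.
Proof. by rewrite dotvC dotvZl dotvC. Qed.

Lemma dotvBr u v w : dotv w (u - v) = dotv w u - dotv w v.
Proof. by rewrite dotvC dotvBl !(dotvC w). Qed.

Lemma dotv_ge0 u : 0 <= dotv u u.
Proof. by apply: sumr_ge0 => i _; rewrite -expr2 sqr_ge0. Qed.

Lemma enorm_ge0 u : 0 <= enorm u.
Proof. exact: sqrtr_ge0. Qed.

Lemma enorm_sqr u : enorm u ^+ 2 = dotv u u.
Proof. by rewrite sqr_sqrtr // dotv_ge0. Qed.

Lemma enormZ c u : 0 <= c -> enorm (c *: u) = c * enorm u.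
Proof.
move=> c_ge0; rewrite /enorm dotvZl dotvZr mulrA -expr2 sqrtrM ?sqr_ge0 //.
by rewrite sqrtr_sqr ger0_norm.
Qed.

Lemma enormN u : enorm (- u) = enorm u.
Proof. by rewrite /enorm dotvNl dotvC dotvNl opprK. Qed.

Lemma enormB_sqr u v :
  enorm (u - v) ^+ 2 = enorm u ^+ 2 - 2 * dotv u v + enorm v ^+ 2.
Proof. by rewrite !enorm_sqr !dotvBl !dotvBr (dotvC v u); ring. Qed.

Lemma dotv_sqr_le u v : dotv u v ^+ 2 <= dotv u u * dotv v v.
Proof.
(* the quadratic t |-> |u - t v|^2 is nonnegative; evaluate it at a suitable t *)
have quad_ge0 t : 0 <= dotv u u - 2 * t * dotv u v + t ^+ 2 * dotv v v.
  have := dotv_ge0 (u - t *: v).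
  by rewrite !dotvBl !dotvBr !dotvZl !dotvZr (dotvC v u); lra.
have uu_ge0 := dotv_ge0 u; have [vv0|vv_neq0] := eqVneq (dotv v v) 0.
  have [uv0|uv_neq0] := eqVneq (dotv u v) 0; first by rewrite uv0 vv0 expr0n mulr0.
  have := quad_ge0 ((dotv u u + 1) / (2 * dotv u v)); rewrite vv0 mulr0 addr0.
  have -> : 2 * ((dotv u u + 1) / (2 * dotv u v)) * dotv u v = dotv u u + 1.
    by field; rewrite uv_neq0.
  lra.
have vv_gt0 : 0 < dotv v v by rewrite lt_def vv_neq0 dotv_ge0.
have := quad_ge0 (dotv u v / dotv v v).
have -> : dotv u u - 2 * (dotv u v / dotv v v) * dotv u v +
    (dotv u v / dotv v v) ^+ 2 * dotv v v =
    (dotv u u * dotv v v - dotv u v ^+ 2) / dotv v v by field.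
by rewrite pmulr_lge0 ?invr_gt0 // subr_ge0.
Qed.

Lemma dotv_le_enorm u v : dotv u v <= enorm u * enorm v.
Proof.
have [uv_le0|uv_gt0] := leP (dotv u v) 0.
  by rewrite (le_trans uv_le0) // mulr_ge0 // enorm_ge0.
rewrite /enorm -sqrtrM ?dotv_ge0 // -(ger0_norm (ltW uv_gt0)) -sqrtr_sqr.
by rewrite ler_sqrt ?dotv_sqr_le // mulr_ge0 // dotv_ge0.
Qed.

Lemma enorm_scaleD_sqr_le c1 c2 u v : 0 <= c1 -> 0 <= c2 ->
  enorm (c1 *: u + c2 *: v) ^+ 2 <= (c1 + c2) * (c1 * enorm u ^+ 2 + c2 * enorm v ^+ 2).
Proof.
move=> c1_ge0 c2_ge0; have := mulr_ge0 (mulr_ge0 c1_ge0 c2_ge0) (dotv_ge0 (u - v)).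
rewrite !enorm_sqr !(dotvBl, dotvBr, dotvDl, dotvDr, dotvZl, dotvZr) (dotvC v u).
lra.
Qed.

End InnerProduct.

Lemma ler_addgt0Mr (R : realFieldType) (x y c : R) : 0 <= c ->
  (forall e, 0 < e -> x <= y + e * c) -> x <= y.
Proof.
move=> c_ge0 le_xy; apply/ler_addgt0Pr => e e_gt0.
have c1_gt0 : 0 < c + 1 by lra.
apply: le_trans (le_xy _ (divr_gt0 e_gt0 c1_gt0)) _.
by rewrite lerD2l mulrAC ler_pdivrMr //; nra.
Qed.

Section FirstOrder.
Variables (R : realType) (n : nat) (f : 'rV[R]_n -> R) (df : 'rV[R]_n -> 'rV[R]_n).
Hypothesis f_grad : is_gradient f df.

Lemma is_gradient_lb_along y w e : 0 < e ->
  exists2 t0, 0 < t0 & forall t, 0 < t <= t0 ->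
    f y + t * dotv (df y) w - e * t * enorm w <= f (y + t *: w).
Proof.
move=> e_gt0; have [d [d_gt0 near_y]] := f_grad y e_gt0.
have w_ge0 := enorm_ge0 w.
exists (d / (enorm w + 1)) => [|t /andP[t_gt0 t_le]]; first by rewrite divr_gt0 //; lra.
have step : y + t *: w - y = t *: w by rewrite addrC addKr.
have tw_lt_d : t * enorm w < d.
  by rewrite ler_pdivlMr in t_le; nra.
have := near_y (y + t *: w); rewrite step enormZ ?(ltW t_gt0) // dotvZr.
by move=> /(_ tw_lt_d) /ler_normlP [+ _]; lra.
Qed.

Lemma strongly_convex_gradient_lb mu : 0 <= mu -> strongly_convex mu f ->
  forall y u, f y + dotv (df y) (u - y) + mu / 2 * enorm (u - y) ^+ 2 <= f u.
Proof.
move=> mu_ge0 f_sc y u; set w := u - y; set d := enorm w.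
have d_ge0 : 0 <= d := enorm_ge0 w.
have mu2_ge0 : 0 <= mu / 2 by rewrite divr_ge0.
apply: (@ler_addgt0Mr _ _ _ (d + mu / 2 * d ^+ 2)); first by nra.
move=> e e_gt0; have [t0 t0_gt0 lb] := is_gradient_lb_along y w e_gt0.
pose t := Num.min e (Num.min 1 t0).
have t_gt0 : 0 < t by rewrite !lt_min e_gt0 ltr01.
have [t_le_e t_le1 t_le_t0] : [/\ t <= e, t <= 1 & t <= t0].
  by rewrite !ge_min !lexx !orbT.
have pE : t *: u + (1 - t) *: y = y + t *: w.
  by apply/rowP => i; rewrite !mxE; ring.
have := f_sc u y t; rewrite (ltW t_gt0) t_le1 -/w -/d pE => /(_ isT) sc.
have := lb t; rewrite t_gt0 t_le_t0 => /(_ isT) lbt.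
have : t * (dotv (df y) w - e * d) <= t * (f u - f y - mu / 2 * (1 - t) * d ^+ 2).
  by rewrite -/d in lbt; lra.
rewrite ler_pM2l // => key.
have : mu / 2 * t * d ^+ 2 <= mu / 2 * e * d ^+ 2 by rewrite ler_wpM2r ?sqr_ge0 ?ler_wpM2l.
lra.
Qed.

End FirstOrder.

Section ProxGradStep.
Variables (R : realType) (n : nat) (g : 'rV[R]_n -> R) (G : 'rV[R]_n -> 'rV[R]_n) (mu : R).
Hypotheses (mu_ge0 : 0 <= mu) (g_sc : strongly_convex mu g) (g_grad : is_gradient g G).

Lemma inexact_prox_grad_ineq (eta : R) (y x1 v u : 'rV[R]_n) (Hx1 Hu : R) :
  0 < eta ->
  g x1 <= g y + dotv (G y) (x1 - y) + 1 / (2 * eta) * enorm (x1 - y) ^+ 2 ->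
  Hx1 + dotv v (u - x1) <= Hu ->
  g x1 + Hx1 <= g u + Hu - dotv (G y + eta^-1 *: (x1 - y) + v) (u - x1)
    + (eta^-1 - mu) / 2 * enorm (u - y) ^+ 2 - eta^-1 / 2 * enorm (u - x1) ^+ 2.
Proof.
move=> eta_gt0 descent subgrad.
have g_lb := strongly_convex_gradient_lb g_grad mu_ge0 g_sc y u.
have diffE : u - x1 = (u - y) - (x1 - y) by rewrite opprB addrA subrK.
rewrite diffE in subgrad *; move: descent g_lb subgrad.
have -> : 1 / (2 * eta) = eta^-1 / 2 by rewrite mul1r invfM mulrC.
move: (u - y) (x1 - y) => Q P.
rewrite enormB_sqr !(dotvDl, dotvBr, dotvZl) !enorm_sqr (dotvC Q P).
lra.
Qed.

End ProxGradStep.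

Section IAPGCoefficients.
Variables (R : realType) (n : nat) (mu a eta gam gam1 : R).
Hypotheses (mu_ge0 : 0 <= mu) (a_gt0 : 0 < a) (eta_gt0 : 0 < eta) (gam_gt0 : 0 < gam).
Hypotheses (gam1_eta : gam1 = a ^+ 2 / eta) (gam1_rec : gam1 = (1 - a) * gam + a * mu).

Lemma iapg_coef_le1 (L : R) : 0 < L -> mu <= L -> eta <= 1 / L -> a <= 1.
Proof.
move=> L_gt0 mu_le_L; rewrite ler_pdivlMr // mulrC => eta_L_le1.
have mu_eta_le1 : mu * eta <= 1 by apply: le_trans eta_L_le1; rewrite ler_wpM2r // ltW.
rewrite leNgt; apply/negP => a_gt1.
have : mu * a ^+ 2 <= a ^+ 2 / eta.
  by rewrite mulrC ler_pdivlMr // -mulrA ler_piMr // sqr_ge0.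
have : 0 <= mu * a * (a - 1) by rewrite !mulr_ge0 ?subr_ge0 // ?ltW.
have : 0 < gam * (a - 1) by rewrite mulr_gt0 ?subr_gt0.
rewrite -gam1_eta gam1_rec; nra.
Qed.

Lemma iapg_momentum_gap (xs xk x1 : 'rV[R]_n) :
  a *: xs + (1 - a) *: xk - x1 = a *: (xs - (xk + a^-1 *: (x1 - xk))).
Proof. by apply/rowP => i; rewrite !mxE; field; rewrite gt_eqF. Qed.

Lemma iapg_extrapolation_bound (xs xk zk : 'rV[R]_n) : a <= 1 ->
  (eta^-1 - mu) * enorm (a *: xs + (1 - a) *: xk
      - (a * gam + gam1)^-1 *: (a * gam *: zk + gam1 *: xk)) ^+ 2
  <= (1 - a) * (gam * enorm (xs - zk) ^+ 2 + a * mu * enorm (xs - xk) ^+ 2).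
Proof.
move=> a_le1; have c_gt0 : 0 < gam + a * mu by rewrite ltr_wpDr // mulr_ge0 // ltW.
have gapE : a *: xs + (1 - a) *: xk - (a * gam + gam1)^-1 *: (a * gam *: zk + gam1 *: xk)
    = (a / (gam + a * mu)) *: (gam *: (xs - zk) + (a * mu) *: (xs - xk)).
  apply/rowP => i; rewrite !mxE gam1_rec.
  have -> : a * gam + ((1 - a) * gam + a * mu) = gam + a * mu by ring.
  by field; rewrite gt_eqF.
have coefE : eta^-1 - mu = (1 - a) * (gam + a * mu) / a ^+ 2.
  have -> : eta^-1 = gam1 / a ^+ 2 by rewrite gam1_eta; field; rewrite !gt_eqF.
  by rewrite gam1_rec; field; rewrite gt_eqF.
rewrite gapE enormZ ?divr_ge0 ?(ltW a_gt0) ?(ltW c_gt0) // coefE.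
have -> : (1 - a) * (gam + a * mu) / a ^+ 2 * (a / (gam + a * mu) *
    enorm (gam *: (xs - zk) + (a * mu) *: (xs - xk))) ^+ 2
  = (1 - a) / (gam + a * mu) * enorm (gam *: (xs - zk) + (a * mu) *: (xs - xk)) ^+ 2.
  by field; rewrite !gt_eqF.
have jensen := enorm_scaleD_sqr_le (xs - zk) (xs - xk) (ltW gam_gt0)
  (mulr_ge0 (ltW a_gt0) mu_ge0).
have w_ge0 : 0 <= (1 - a) / (gam + a * mu) by rewrite divr_ge0 ?subr_ge0 // ltW.
apply: le_trans (ler_wpM2l w_ge0 jensen) _.
by rewrite mulrA divfK ?gt_eqF.
Qed.

End IAPGCoefficients.

Section ExtendedValues.
Variables (R : realType) (n : nat).
Local Open Scope ereal_scope.

Lemma dist0_subdiff_approx (H : 'rV[R]_n -> \bar R) (c x : 'rV[R]_n) (e d : R) :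
  dist0 [set (c + v)%R | v in subdiff H x] <= e%:E -> (0 < d)%R ->
  exists2 v, subdiff H x v & (enorm (c + v) < e + d)%R.
Proof.
move=> dist_le d_gt0.
have : dist0 [set (c + v)%R | v in subdiff H x] < (e + d)%:E.
  by apply: le_lt_trans dist_le _; rewrite lte_fin ltrDl.
by move=> /ereal_inf_lt [_ [_ [v v_sub <-] <-]]; rewrite lte_fin; exists v.
Qed.

Lemma convex_efun_fin (f : 'rV[R]_n -> \bar R) (x y : 'rV[R]_n) (t fx fy : R) :
  convex_efun f -> (forall p, f p != -oo) -> f x = fx%:E -> f y = fy%:E -> (0 < t < 1)%R ->
  exists2 fu, f (t *: x + (1 - t) *: y)%R = fu%:E & (fu <= t * fx + (1 - t) * fy)%R.
Proof.
move=> f_cvx f_nm fxE fyE t01; have := f_cvx x y t t01; rewrite fxE fyE.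
move: (f_nm (t *: x + (1 - t) *: y)%R).
by case: (f _) => [fu| |] // _; rewrite -EFinM -EFinM -EFinD lee_fin; exists fu.
Qed.

End ExtendedValues.

Section IAPGStep.
Variables (R : realType) (n : nat) (g h : 'rV[R]_n -> R) (r : 'rV[R]_n -> \bar R).
Variables (G : 'rV[R]_n -> 'rV[R]_n) (mu a eta gam gam1 eps Fs : R).
Variables (xs xk zk x1 y z1 : 'rV[R]_n).
Hypotheses (mu_ge0 : 0 <= mu) (g_sc : strongly_convex mu g) (g_grad : is_gradient g G).
Hypotheses (h_cvx : convex_fun h) (r_nm : forall p, r p != -oo%E) (r_cvx : convex_efun r).
Hypothesis Fs_def : ((g xs)%:E + ((h xs)%:E + r xs) = Fs%:E)%E.
Hypotheses (a_gt0 : 0 < a) (a_le1 : a <= 1) (eta_gt0 : 0 < eta) (gam_gt0 : 0 < gam).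
Hypotheses (gam1_eta : gam1 = a ^+ 2 / eta) (gam1_rec : gam1 = (1 - a) * gam + a * mu).
Hypothesis y_def : y = (a * gam + gam1)^-1 *: (a * gam *: zk + gam1 *: xk).
Hypothesis z1_def : z1 = xk + a^-1 *: (x1 - xk).
Hypothesis descent :
  g x1 <= g y + dotv (G y) (x1 - y) + 1 / (2 * eta) * enorm (x1 - y) ^+ 2.
Hypothesis dist_le : (dist0 [set (G y + eta^-1 *: (x1 - y) + v)%R
  | v in subdiff (fun p => (h p)%:E + r p)%E x1] <= eps%:E)%E.

Local Notation u := (a *: xs + (1 - a) *: xk).

Lemma iapg_step_bound (Hx1 Hu : R) :
  (forall d, 0 < d -> exists2 v, Hx1 + dotv v (u - x1) <= Hu &
     enorm (G y + eta^-1 *: (x1 - y) + v) < eps + d) ->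
  g x1 + Hx1 + gam1 / 2 * enorm (xs - z1) ^+ 2
  <= g u + Hu + (1 - a) / 2 * (gam * enorm (xs - zk) ^+ 2 + a * mu * enorm (xs - xk) ^+ 2)
     + eps * a * enorm (xs - z1).
Proof.
move=> approx; set w := xs - z1.
have w_ge0 := enorm_ge0 w.
apply: (@ler_addgt0Mr _ _ _ (a * enorm w)); first by rewrite mulr_ge0 // ltW.
move=> d d_gt0; have [v subgrad s_lt] := approx d d_gt0.
have := inexact_prox_grad_ineq mu_ge0 g_sc g_grad eta_gt0 descent subgrad.
rewrite iapg_momentum_gap // -z1_def -/w dotvZr enormZ ?(ltW a_gt0) //.
have := iapg_extrapolation_bound mu_ge0 a_gt0 eta_gt0 gam_gt0 gam1_eta gam1_rec xs xk zk a_le1.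
rewrite -y_def.
set s := G y + eta^-1 *: (x1 - y) + v in s_lt *.
have : - (a * dotv s w) <= a * ((eps + d) * enorm w).
  rewrite -mulrN -dotvNl ler_pM2l //; apply: le_trans (dotv_le_enorm _ _) _.
  by rewrite enormN ler_wpM2r // ltW.
have -> : eta^-1 / 2 * (a * enorm w) ^+ 2 = gam1 / 2 * enorm w ^+ 2.
  by rewrite gam1_eta; field; rewrite gt_eqF.
lra.
Qed.

Lemma iapg_step_bound_fin (rx1 ru : R) : r x1 = rx1%:E -> r u = ru%:E ->
  g x1 + (h x1 + rx1) + gam1 / 2 * enorm (xs - z1) ^+ 2
  <= g u + (h u + ru) + (1 - a) / 2 * (gam * enorm (xs - zk) ^+ 2
       + a * mu * enorm (xs - xk) ^+ 2) + eps * a * enorm (xs - z1).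
Proof.
move=> rx1E ruE; apply: iapg_step_bound => d d_gt0.
have [v [_ v_sub] s_lt] := dist0_subdiff_approx dist_le d_gt0; exists v => //.
by have := v_sub u; rewrite rx1E ruE -!EFinD lee_fin.
Qed.

Lemma iapg_step :
  ((g x1)%:E + ((h x1)%:E + r x1) - Fs%:E + (gam1 / 2 * enorm (xs - z1) ^+ 2)%:E
   <= (1 - a)%:E * ((g xk)%:E + ((h xk)%:E + r xk) - Fs%:E
         + (gam / 2 * enorm (xs - zk) ^+ 2)%:E)
      + (eps * a * enorm (xs - z1))%:E)%E.
Proof.
have [rs rsE] : exists rs, r xs = rs%:E.
  by move: Fs_def (r_nm xs); case: (r xs) => [rs| |] // _ _; exists rs.
have FsE : Fs = g xs + (h xs + rs) by move: Fs_def; rewrite rsE => -[].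
have [rx1 rx1E] : exists rx1, r x1 = rx1%:E.
  have [v [H_fin _] _] := dist0_subdiff_approx dist_le ltr01.
  by move: H_fin (r_nm x1); case: (r x1) => [rx1| |] // _ _; exists rx1.
(* For a = 1 the factor (1 - a) kills the x_k term even when r x_k = +oo, since 0 * +oo = 0. *)
rewrite rx1E; have [a_lt1|a_ge1] := ltP a 1; last first.
  have a1 : a = 1 by apply/le_anti; rewrite a_le1 a_ge1.
  have uE : u = xs by rewrite a1 subrr scale0r scale1r addr0.
  have ruE : r u = rs%:E by rewrite uE.
  have := iapg_step_bound_fin rx1E ruE; rewrite uE => bound.
  rewrite a1 subrr mul0e add0e -?(EFinN, EFinD, EFinB, EFinM) lee_fin FsE.
  by rewrite a1 in bound; lra.
move: (r_nm xk); case rkE: (r xk) => [rk| |] // _; last first.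
  by rewrite !addey // !addye // muleC gt0_mulye ?lte_fin ?subr_gt0 // addye // leey.
have a_in_oo : 0 < a < 1 by rewrite a_gt0 a_lt1.
have [ru ruE ru_le] := convex_efun_fin r_cvx r_nm rsE rkE a_in_oo.
have a_in_cc : 0 <= a <= 1 by rewrite ltW // a_le1.
have g_le := g_sc xs xk a_in_cc; have h_le := h_cvx xs xk a_in_cc.
have := iapg_step_bound_fin rx1E ruE.
rewrite -?(EFinN, EFinD, EFinB, EFinM) lee_fin FsE.
lra.
Qed.

End IAPGStep.

Theorem proposition3p4 (R : realType) (n : nat)
  (g h : 'rV[R]_n -> R) (r : 'rV[R]_n -> \bar R)
  (gradg gradh : 'rV[R]_n -> 'rV[R]_n) (mu Lg Lh : R)
  (xstar : 'rV[R]_n) (Fstar : R)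
  (gamma_dec Lunder : R)
  (x z y : nat -> 'rV[R]_n) (eta alpha gamma eps : nat -> R) :
  convex_fun g -> 0 <= mu -> strongly_convex mu g ->
  is_gradient g gradg -> 0 < Lg -> lipschitz_with Lg gradg ->
  convex_fun h -> is_gradient h gradh -> lipschitz_with Lh gradh ->
  proper_fun r -> closed_fun r -> convex_efun r ->
  ((g xstar)%:E + ((h xstar)%:E + r xstar) = Fstar%:E)%E ->
  (forall u, (Fstar%:E <= (g u)%:E + ((h u)%:E + r u))%E) ->
  0 < gamma_dec < 1 -> 0 < Lunder -> mu <= Lunder -> Lunder <= Lg ->
  x 0%N = z 0%N -> (x 0%N) \in dom (fun u => (h u)%:E + r u)%E ->
  mu <= gamma 0%N ->
  (forall k, 0 < eta k /\ 0 < alpha k /\ 0 < gamma k /\ 0 <= eps k) ->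
  (* (i) *)
  (forall k, gamma_dec / Lg < eta k /\ eta k <= 1 / Lunder) ->
  (* (ii) *)
  (forall k, gamma k.+1 = alpha k ^+ 2 / eta k /\
             alpha k ^+ 2 / eta k = (1 - alpha k) * gamma k + alpha k * mu) ->
  (* (iii) *)
  (forall k, y k = (alpha k * gamma k + gamma k.+1)^-1 *:
                   (alpha k * gamma k *: z k + gamma k.+1 *: x k)) ->
  (* (iv) *)
  (forall k, (dist0 [set (gradg (y k) + (eta k)^-1 *: (x k.+1 - y k) + v)%R
                    | v in subdiff (fun u => (h u)%:E + r u)%E (x k.+1)]
              <= (eps k)%:E)%E) ->
  (* (v) *)
  (forall k, g (x k.+1) <= g (y k) + dotv (gradg (y k)) (x k.+1 - y k)
                           + 1 / (2 * eta k) * enorm (x k.+1 - y k) ^+ 2) ->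
  (* (vi) *)
  (forall k, z k.+1 = x k + (alpha k)^-1 *: (x k.+1 - x k)) ->
  forall k,
    ((g (x k.+1))%:E + ((h (x k.+1))%:E + r (x k.+1)) - Fstar%:E
       + (gamma k.+1 / 2 * enorm (xstar - z k.+1) ^+ 2)%:E
     <= (1 - alpha k)%:E *
          ((g (x k))%:E + ((h (x k))%:E + r (x k)) - Fstar%:E
             + (gamma k / 2 * enorm (xstar - z k) ^+ 2)%:E)
        + (eps k * alpha k * enorm (xstar - z k.+1))%:E)%E.
Proof.
move=> _ mu_ge0 g_sc g_grad _ _ h_cvx _ _ [r_nm _] _ r_cvx Fxs _ _ Lu_gt0 mu_le_Lu _ _ _ _
  pos eta_bnd rec y_def dist_le descent z_def k.
have [eta_gt0 [a_gt0 [gam_gt0 _]]] := pos k.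
have [gam1_eta gam1_rec] := rec k; rewrite -gam1_eta in gam1_rec.
have a_le1 : alpha k <= 1.
  have [_ eta_le] := eta_bnd k.
  exact: (iapg_coef_le1 mu_ge0 a_gt0 eta_gt0 gam_gt0 gam1_eta gam1_rec Lu_gt0 mu_le_Lu eta_le).
exact: (iapg_step mu_ge0 g_sc g_grad h_cvx r_nm r_cvx Fxs a_gt0 a_le1 eta_gt0 gam_gt0
  gam1_eta gam1_rec (y_def k) (z_def k) (descent k) (dist_le k)).
Qed.
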